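(* Let $x$ be an element of a commutative ring $R$, $U$ a variable, $M$ an $R$-module and $\hat{M}^{xR}=\varprojlim_n M/x^nM$ its $xR$-adic completion. Then: (a) $H_0(x-U;M[[U]])\cong M[[U]]/(x-U)M[[U]]$, and the map $\sum_{i\ge0}m_iU^i\mapsto\big(\sum_{i<n}x^im_i+x^nM\big)_{n}$ induces an epimorphism $M[[U]]/(x-U)M[[U]]\twoheadrightarrow\hat{M}^{xR}$. (b) $H_1(x-U;M[[U]])\cong\ker\big(\operatorname{Hom}_R(R_x,M)\to M\big)$, where the map sends $\varphi$ to $\varphi(1)$. (c) If $M$ is of bounded $xR$-torsion, then $H_1(x-U;M[[U]])=0$ and $H_0(x-U;M[[U]])\cong\hat{M}^{xR}$ (via the map in (a)).
   Context: $M[[U]]$ is the module of formal power series over $M$, an $R[U]$-module; $H_i(x-U;M[[U]])$ denotes the homology of the Koszul complex $0\to M[[U]]\xrightarrow{x-U}M[[U]]\to0$ (homological degrees $1,0$). $M$ is of bounded $xR$-torsion if there is $k$ with $0:_Mx^k=0:_Mx^{k+j}$ for all $j\ge0$. *)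

From HB Require Import structures.
From mathcomp Require Import all_boot all_order all_algebra.
Unset Printing Implicit Defensive.
Import GRing.Theory.
Local Open Scope ring_scope.

(* M[[U]] is modelled by coefficient sequences f : nat -> M, f = sum_i f i U^i. *)
Section Defs.
Variables (R : comPzRingType) (M : lmodType R) (x : R).

(* multiplication by (x - U) on M[[U]]: coefficient n is x f_n - f_{n-1} *)
Definition mulxU (f : nat -> M) : nat -> M :=
  fun n => x *: f n - (if n is n'.+1 then f n' else 0).

(* cycles of the Koszul complex, i.e. elements of H_1(x-U; M[[U]]) *)
Definition koszul_cycle (g : nat -> M) : Prop := forall n, mulxU g n = 0.

Definition in_xpowM (n : nat) (v : M) : Prop := exists m : M, v = x ^+ n *: m.

Definition adic_psum (f : nat -> M) (n : nat) : M := \sum_(i < n) x ^+ i *: f i.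

(* elements of lim_n M/x^nM, represented by sequences of representatives y n of
   classes in M/x^nM, compatible under the transition maps *)
Definition completion_elt (y : nat -> M) : Prop :=
  forall n, in_xpowM n (y n.+1 - y n).

(* equality in lim_n M/x^nM *)
Definition completion_eq (y z : nat -> M) : Prop :=
  forall n, in_xpowM n (y n - z n).

(* R_x = fractions r/x^n, with r/x^n = s/x^m iff x^k (x^m r - x^n s) = 0 *)
Definition loc_equiv (p q : R * nat) : Prop :=
  exists k, x ^+ k * (x ^+ q.2 * p.1 - x ^+ p.2 * q.1) = 0.

(* h : R_x -> M given on representatives (r, n) ~ r/x^n, R-linear *)
Definition is_hom_loc (h : R -> nat -> M) : Prop :=
  [/\ (forall r n s m, loc_equiv (r, n) (s, m) -> h r n = h s m),
      (forall r n s m, h (r * x ^+ m + s * x ^+ n) (n + m)%N = h r n + h s m)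
    & (forall a r n, h (a * r) n = a *: h r n)].

Definition bounded_torsion : Prop :=
  exists k : nat, forall (j : nat) (m : M), x ^+ k *: m = 0 <-> x ^+ (k + j) *: m = 0.

End Defs.

Arguments mulxU {R M} x f n.
Arguments koszul_cycle {R M} x g.
Arguments in_xpowM {R M} x n v.
Arguments adic_psum {R M} x f n.
Arguments completion_elt {R M} x y.
Arguments completion_eq {R M} x y z.
Arguments loc_equiv {R} x p q.
Arguments is_hom_loc {R M} x h.
Arguments bounded_torsion {R} M x.

(* For (a), partial sums of [sum_i x^i m_i] are compatible, those of [(x-U)g]
   are [x^(n+1) g_n], and a compatible sequence [y] is hit by the series with
   coefficients [y_1], then [(y_(n+1) - y_n)/x^n].
   For (b), a cycle [g] of [x-U] satisfies [x g_n = g_(n-1)], [g_(-1) = 0], so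
   [r/x^(n+1) |-> r g_n] is a well-defined homomorphism [R_x -> M] killing [1],
   and conversely [h |-> (h(1/x^(n+1)))_n].
   For (c), [x^k] kills the torsion, so a cycle [g] vanishes: [g_n] is
   [x^k g_(n+k)], and [x^(n+k+1) g_(n+k) = 0].  If [f] maps to [0] in the
   completion, [f] is congruent modulo [(x-U)M[[U]]] to a series [D] with
   [x^n D_n = 0 = x^k D_n], and such a [D] is [(x-U)] times
   [-(sum_(j<k) x^j D_(n+j+1))_n]. *)
From HB Require Import structures.
From mathcomp Require Import all_boot all_order all_algebra.
From mathcomp Require Import ring.
From Stdlib Require Import ClassicalEpsilon.
Import GRing.Theory.
Local Open Scope ring_scope.

Section KoszulPowerSeries.
Variables (R : comPzRingType) (M : lmodType R) (x : R).

Lemma adic_psum0 (f : nat -> M) : adic_psum x f 0 = 0.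
Proof. by rewrite /adic_psum big_ord0. Qed.

Lemma adic_psumS (f : nat -> M) n :
  adic_psum x f n.+1 = adic_psum x f n + x ^+ n *: f n.
Proof. by rewrite /adic_psum big_ord_recr. Qed.

Lemma adic_psum_mulxUS (g : nat -> M) n :
  adic_psum x (mulxU x g) n.+1 = x ^+ n.+1 *: g n.
Proof.
elim: n => [|n IH]; first by rewrite adic_psumS adic_psum0 add0r /mulxU subr0 scale1r.
by rewrite adic_psumS IH /mulxU scalerBr scalerA -exprSr addrC subrK.
Qed.

Lemma mulxUB (u v : nat -> M) n :
  mulxU x (fun i => u i - v i) n = mulxU x u n - mulxU x v n.
Proof.
rewrite /mulxU scalerBr; case: n => [|n]; first by rewrite !subr0.
by rewrite opprB addrACA opprD opprK addrACA [RHS]addrACA [v n + _]addrC.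
Qed.

Lemma in_xpowM_choice (y : nat -> M) :
  (forall n, in_xpowM x n (y n)) -> exists m, forall n, y n = x ^+ n *: m n.
Proof.
move=> hy; exists (fun n => proj1_sig (constructive_indefinite_description _ (hy n))).
by move=> n; exact: proj2_sig (constructive_indefinite_description _ (hy n)).
Qed.

Lemma completion_elt_adic_psum (f : nat -> M) : completion_elt x (adic_psum x f).
Proof. by move=> n; exists (f n); rewrite adic_psumS addrC addKr. Qed.

Lemma adic_psum_mulxU_eq0 (g : nat -> M) :
  completion_eq x (adic_psum x (mulxU x g)) (fun=> 0).
Proof.
case=> [|n]; first by exists 0; rewrite adic_psum0 subr0 scaler0.
by exists (g n); rewrite adic_psum_mulxUS subr0.
Qed.

Lemma adic_psum_onto (y : nat -> M) : completion_elt x y ->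
  exists f, completion_eq x (adic_psum x f) y.
Proof.
case/in_xpowM_choice=> m hm; exists (fun n => if n is 0 then y 1%N else m n).
have psumE n : adic_psum x (fun n => if n is 0 then y 1%N else m n) n.+1 = y n.+1.
  elim: n => [|n IH]; first by rewrite adic_psumS adic_psum0 add0r scale1r.
  by rewrite adic_psumS IH -hm addrC subrK.
case=> [|n]; first by exists (- y 0%N); rewrite adic_psum0 sub0r scale1r.
by exists 0; rewrite psumE subrr scaler0.
Qed.

(* the series [U g], so that a cycle is exactly a solution of [x (U g)_(n+1) = (U g)_n] *)
Definition shiftU (g : nat -> M) n : M := if n is n'.+1 then g n' else 0.

Lemma koszul_cycle_shiftS {g} : koszul_cycle x g ->
  forall n, x *: shiftU g n.+1 = shiftU g n.
Proof. by move=> c n; apply/eqP; rewrite -subr_eq0; apply/eqP/c. Qed.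

Lemma koszul_cycle_shiftX {g} : koszul_cycle x g ->
  forall j n, x ^+ j *: shiftU g (n + j) = shiftU g n.
Proof.
move=> c; elim=> [|j IH] n; first by rewrite addn0 scale1r.
by rewrite exprSr -scalerA addnS koszul_cycle_shiftS.
Qed.

Definition cycle_hom (g : nat -> M) (r : R) n : M := r *: shiftU g n.

Definition hom_cycle (h : R -> nat -> M) n : M := h 1 n.+1.

Lemma is_hom_loc_cycle_hom (g : nat -> M) : koszul_cycle x g -> is_hom_loc x (cycle_hom g).
Proof.
move=> c; split=> [r n s m [k hk]|r n s m|a r n]; rewrite /cycle_hom.
- rewrite -(koszul_cycle_shiftX c (m + k) n) -(koszul_cycle_shiftX c (n + k) m).
  rewrite !scalerA addnCA; apply/eqP; rewrite -subr_eq0 -scalerBl.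
  have -> : r * x ^+ (m + k) - s * x ^+ (n + k) = x ^+ k * (x ^+ m * r - x ^+ n * s).
    by rewrite !exprD; ring.
  by rewrite hk scale0r.
- by rewrite scalerDl -!scalerA (koszul_cycle_shiftX c) addnC (koszul_cycle_shiftX c).
- by rewrite scalerA.
Qed.

Lemma is_hom_loc_scale_denom (h : R -> nat -> M) : is_hom_loc x h -> forall n, x *: h 1 n.+1 = h 1 n.
Proof.
case=> h_equiv _ h_scale n; rewrite -h_scale (h_equiv _ _ 1 n) //.
by exists 0%N; rewrite mulr1 mul1r exprSr mulr1 subrr.
Qed.

Lemma koszul_cycle_hom_cycle (h : R -> nat -> M) : is_hom_loc x h -> h 1 0%N = 0 ->
  koszul_cycle x (hom_cycle h).
Proof.
move=> hh h10 n; rewrite /mulxU /hom_cycle is_hom_loc_scale_denom //.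
by case: n => [|n]; rewrite ?h10 subrr.
Qed.

Lemma cycle_homK (g : nat -> M) n : hom_cycle (cycle_hom g) n = g n.
Proof. exact: scale1r. Qed.

Lemma hom_cycleK (h : R -> nat -> M) : is_hom_loc x h -> h 1 0%N = 0 ->
  forall r n, cycle_hom (hom_cycle h) r n = h r n.
Proof.
case=> _ _ h_scale h10 r [|n]; rewrite /cycle_hom /=.
  by rewrite scaler0 -[r]mulr1 h_scale h10 scaler0.
by rewrite -h_scale mulr1.
Qed.

Lemma cycle_hom_linear a (g g' : nat -> M) r n :
  cycle_hom (fun i => a *: g i + g' i) r n = a *: cycle_hom g r n + cycle_hom g' r n.
Proof.
by case: n => [|n]; rewrite /cycle_hom /= ?scaler0 ?addr0 // scalerDr !scalerA mulrC.
Qed.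

Lemma bounded_torsion_annihilator : bounded_torsion M x ->
  exists k, forall n (m : M), x ^+ n *: m = 0 -> x ^+ k *: m = 0.
Proof.
case=> k hk; exists k => n m e; case: (leqP n k) => nk.
  by rewrite -(subnK nk) exprD -scalerA e scaler0.
by apply/(hk (n - k)%N); rewrite subnKC // ltnW.
Qed.

Lemma koszul_cycle_torsion_eq0 k (g : nat -> M) :
  (forall n (m : M), x ^+ n *: m = 0 -> x ^+ k *: m = 0) ->
  koszul_cycle x g -> forall n, g n = 0.
Proof.
move=> tor c n; rewrite -[g n]/(shiftU g n.+1) -(koszul_cycle_shiftX c k n.+1).
by apply: (tor (n.+1 + k)%N); rewrite -[X in shiftU _ X]add0n (koszul_cycle_shiftX c).
Qed.

Lemma adic_psum_eq0_mulxU_torsion (f : nat -> M) :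
  completion_eq x (adic_psum x f) (fun=> 0) ->
  exists g, forall n, x ^+ n *: (mulxU x g n - f n) = 0.
Proof.
case/in_xpowM_choice=> a ha; exists (fun n => a n.+1) => n.
have psumE i : adic_psum x f i = x ^+ i *: a i by rewrite -ha subr0.
rewrite /mulxU !scalerBr scalerA -exprSr -psumE adic_psumS.
case: n => [|n]; first by rewrite adic_psum0 scaler0 !subr0 add0r subrr.
by rewrite -psumE addrAC addrK subrr.
Qed.

Lemma mulxU_onto_torsion k (D : nat -> M) :
  (forall n, x ^+ n *: D n = 0) -> (forall n, x ^+ k *: D n = 0) ->
  exists g, forall n, D n = mulxU x g n.
Proof.
move=> xnD xkD; pose S n := \sum_(j < k) x ^+ j *: D (n + j)%N.
have S0 : S 0%N = 0 by apply: big1 => j _; rewrite add0n xnD.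
have SS n : x *: S n.+1 = S n - D n.
  have Sk1 : \sum_(j < k.+1) x ^+ j *: D (n + j)%N = S n.
    by rewrite big_ord_recr /= xkD addr0.
  rewrite -Sk1 big_ord_recl /= addn0 scale1r scaler_sumr addrC addKr.
  by apply: eq_bigr => j _; rewrite scalerA -exprS addnS addSn.
exists (fun n => - S n.+1) => n; rewrite /mulxU scalerN SS.
by case: n => [|n]; rewrite ?S0 ?subr0 ?sub0r ?opprK // opprB subrK.
Qed.

End KoszulPowerSeries.

Arguments mulxU_onto_torsion {R M x k D}.

Theorem lemma4p2 (R : comPzRingType) (M : lmodType R) (x : R) :
  ((forall f : nat -> M, completion_elt x (adic_psum x f)) /\
   (forall g : nat -> M, completion_eq x (adic_psum x (mulxU x g)) (fun _ : nat => (0 : M))) /\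
   (forall y : nat -> M, completion_elt x y ->
      exists f : nat -> M, completion_eq x (adic_psum x f) y)) /\
  (exists (Phi : (nat -> M) -> R -> nat -> M) (Psi : (R -> nat -> M) -> nat -> M),
     [/\ forall g : nat -> M, koszul_cycle x g -> is_hom_loc x (Phi g) /\ Phi g 1 0%N = 0,
         forall h : R -> nat -> M, is_hom_loc x h -> h 1 0%N = 0 -> koszul_cycle x (Psi h),
         forall g : nat -> M, koszul_cycle x g -> forall n, Psi (Phi g) n = g n,
         forall h : R -> nat -> M, is_hom_loc x h -> h 1 0%N = 0 ->
           forall r n, Phi (Psi h) r n = h r n
       & forall (a : R) (g g' : nat -> M), koszul_cycle x g -> koszul_cycle x g' ->
           forall r n, Phi (fun i => a *: g i + g' i) r n
                       = a *: Phi g r n + Phi g' r n]) /\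
  (bounded_torsion M x ->
     (forall g : nat -> M, koszul_cycle x g -> forall n, g n = 0) /\
     (forall f : nat -> M, completion_eq x (adic_psum x f) (fun _ : nat => (0 : M)) ->
        exists g : nat -> M, forall n, f n = mulxU x g n)).
Proof.
split; [split; [|split]|split].
- exact: completion_elt_adic_psum.
- exact: adic_psum_mulxU_eq0.
- exact: adic_psum_onto.
- exists (@cycle_hom R M), (@hom_cycle R M); split.
  + by move=> g c; split; [exact: is_hom_loc_cycle_hom | exact: scaler0].
  + exact: koszul_cycle_hom_cycle.
  + by move=> g _; exact: cycle_homK.
  + exact: hom_cycleK.
  + by move=> a g g' _ _; exact: cycle_hom_linear.
- case/bounded_torsion_annihilator=> k tor; split.
  + by move=> g; exact: koszul_cycle_torsion_eq0 tor.
  + move=> f /adic_psum_eq0_mulxU_torsion [g xnD].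
    have [h Dh] := mulxU_onto_torsion xnD (fun n => tor n _ (xnD n)).
    by exists (fun i => g i - h i) => n; rewrite mulxUB -Dh opprB addrC subrK.
Qed.
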